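(* Let $\mathcal{M}=(M_\sigma)$ be a linkage $(n,d)$-tope field of type $v=(v_1,\dots,v_d)$ and thickness $k<n$, let $\tau\subseteq L$ be a $(k+1)$-subset and let $C$ be the linkage covector on $\tau\sqcup R$. Then for each $r_i\in R$ there are exactly $v_i+1$ nodes adjacent to $r_i$ in $C$. Furthermore, for each $\ell_j\in\tau$, $C$ contains the tope $M_{\tau\setminus\{\ell_j\}}$ of the tope field, and it is the unique subgraph of $C$ which is a tope with right degree vector $v$ in which $\ell_j$ is isolated (i.e. with left degree vector $\mathbf{1}_{\tau\setminus\{\ell_j\}}$).
   Context: $L=\{\ell_1,\dots,\ell_n\}$, $R=\{r_1,\dots,r_d\}$; graphs are bipartite on $L\sqcup R$, identified with edge sets. For $v\in\mathbb{Z}_{>0}^d$ with $k=\sum v_i\le n$ and a $k$-subset $\sigma\subseteq L$, a tope of type $v$ on $\sigma$ is a graph whose left degree vector is the indicator vector $\mathbf{1}_\sigma$ and whose right degree vector is $v$. An $(n,d)$-tope field of type $v$ (thickness $k$) is a family $(M_\sigma)$ with one tope $M_\sigma$ of type $v$ on $\sigma$ for each $k$-subset $\sigma\subseteq L$. It is linkage if for every $(k+1)$-subset $\tau\subseteq L$, the union $C_\tau$ of the topes $M_\sigma$, $\sigma\subset\tau$, is a tree on the node set $\tau\sqcup R$; $C_\tau$ is called the linkage covector on $\tau$. *)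

From mathcomp Require Import all_boot.
Set Implicit Arguments. Unset Strict Implicit. Unset Printing Implicit Defensive.

(* L = 'I_n (left nodes l_1..l_n), R = 'I_d (right nodes r_1..r_d).
   A bipartite graph on L ⊔ R is identified with its edge set,
   a subset of L × R. *)
Definition graph (n d : nat) := {set 'I_n * 'I_d}.

Definition ldeg n d (G : graph n d) (l : 'I_n) : nat := #|[set e in G | e.1 == l]|.
Definition rdeg n d (G : graph n d) (r : 'I_d) : nat := #|[set e in G | e.2 == r]|.

Definition thickness d (v : 'I_d -> nat) : nat := \sum_(i < d) v i.

Definition is_tope n d (v : 'I_d -> nat) (sigma : {set 'I_n}) (G : graph n d) : Prop :=
  (forall l : 'I_n, ldeg G l = (l \in sigma) :> nat) /\ (forall r : 'I_d, rdeg G r = v r).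

Definition tope_field n d (v : 'I_d -> nat) (M : {set 'I_n} -> graph n d) : Prop :=
  forall sigma : {set 'I_n}, #|sigma| = thickness v -> is_tope v sigma (M sigma).

Definition node n d := ('I_n + 'I_d)%type.
Definition adj n d (G : graph n d) : rel (node n d) :=
  fun x y => match x, y with
             | inl l, inr r => (l, r) \in G
             | inr r, inl l => (l, r) \in G
             | _, _ => false
             end.

Definition nodeset n d (tau : {set 'I_n}) : pred (node n d) :=
  fun x => match x with inl l => l \in tau | inr _ => true end.

(* G is a tree on the node set tau ⊔ R: all its edges lie on this node set,
   it is connected on this node set, and it has no cycle (a cycle being a
   closed walk through at least 3 pairwise distinct nodes). *)
Definition is_tree_on n d (tau : {set 'I_n}) (G : graph n d) : Prop :=
  [/\ (forall e, e \in G -> e.1 \in tau),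
      (forall x y : node n d, nodeset tau x -> nodeset tau y -> connect (adj G) x y)
    & (forall c : seq (node n d), ~ (ucycle (adj G) c /\ 2 < size c))].

Definition covector n d (v : 'I_d -> nat) (M : {set 'I_n} -> graph n d)
    (tau : {set 'I_n}) : graph n d :=
  \bigcup_(sigma : {set 'I_n} | (sigma \subset tau) && (#|sigma| == thickness v)) M sigma.

Definition linkage n d (v : 'I_d -> nat) (M : {set 'I_n} -> graph n d) : Prop :=
  forall tau : {set 'I_n}, #|tau| = (thickness v).+1 -> is_tree_on tau (covector v M tau).

From mathcomp Require Import all_boot.
Set Implicit Arguments. Unset Strict Implicit. Unset Printing Implicit Defensive.

(* The covector C is a tree on the k + 1 + d nodes of tau ⊔ R, so it has at most k + d
   edges.  Each right node r_i has at least v_i + 1 neighbours in C: some l adjacent to r_i,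
   plus the v_i neighbours of r_i in M_(tau \ l), in which l is isolated.  Since the v_i + 1
   add up to k + d, all these bounds are equalities.  Two topes of the same type on the same
   set that lie in an acyclic graph coincide: an edge of one missing from the other would be
   a bridge of their union, which a degree count on a connected component rules out. *)

Lemma card_setI_preim (T U : finType) (f : T -> U) (X : {set T}) (S : {pred U}) :
  #|[set x in X | f x \in S]| = \sum_(u in S) #|[set x in X | f x == u]|.
Proof.
rewrite -sum1_card (partition_big f (mem S)) => [|x]; last by rewrite inE => /andP[].
apply: eq_bigr => u uS; rewrite -sum1_card; apply: eq_bigl => x.
by rewrite !inE; case: eqVneq => [->|_]; rewrite ?andbF ?andbT // [u \in S]uS andbT.
Qed.

Section BipartiteGraphs.
Variables n d : nat.
Implicit Types (G H : graph n d) (e : 'I_n * 'I_d) (x y : node n d).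

Definition acyclic G : Prop :=
  forall c : seq (node n d), ~ (ucycle (adj G) c /\ 2 < size c).

Definition rnbhd G (r : 'I_d) : {set 'I_n} := [set l | (l, r) \in G].

Lemma rdeg_rnbhd G r : rdeg G r = #|rnbhd G r|.
Proof.
have pair_r_inj : injective (fun l : 'I_n => (l, r)) by move=> l l' [].
rewrite /rdeg -(card_imset _ pair_r_inj).
apply: eq_card => -[l r']; rewrite !inE.
apply/andP/imsetP => [[lrG /eqP /= r'r]|[l' + [-> ->]]]; last by rewrite inE.
by subst r'; exists l; rewrite ?inE.
Qed.

Lemma sum_card_rnbhd G : \sum_(i < d) #|rnbhd G i| = #|G|.
Proof.
have -> : #|G| = #|[set x in G | x.2 \in predT]| by apply: eq_card => x; rewrite !inE andbT.
rewrite card_setI_preim; apply: eq_bigr => i _; exact: esym (rdeg_rnbhd G i).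
Qed.

Lemma adj_sym G : symmetric (adj G).
Proof. by case=> [a|b] [a'|b']. Qed.

Lemma connect_adj_sym G : connect_sym (adj G).
Proof. exact/sym_connect_sym/adj_sym. Qed.

Lemma adj_edge G e : adj G (inl e.1) (inr e.2) = (e \in G).
Proof. by case: e. Qed.

Lemma adjS G H : G \subset H -> subrel (adj G) (adj H).
Proof. by move=> /subsetP sGH [a|b] [a'|b'] //= /sGH. Qed.

Lemma connectS G H x y : G \subset H -> connect (adj G) x y -> connect (adj H) x y.
Proof. by move=> sGH; apply: connect_sub => u w /(adjS sGH)/connect1. Qed.

Lemma connect_edge G e x : e \in G ->
  connect (adj G) x (inl e.1) = connect (adj G) x (inr e.2).
Proof. by move=> eG; apply: (same_connect1r (connect_adj_sym G)); rewrite adj_edge. Qed.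

Lemma adj_setD1 G e x y : adj G x y -> ~~ adj (G :\ e) x y ->
  (x == inl e.1) || (x == inr e.2).
Proof.
case: e => l r; case: x y => [a|b] [a'|b'] //= Ge;
  by rewrite in_setD1 Ge andbT negbK => /eqP[la rb]; rewrite ?la ?rb eqxx.
Qed.

Lemma connect_setD1 G e x y : connect (adj G) x y ->
  [|| connect (adj (G :\ e)) x y, connect (adj (G :\ e)) x (inl e.1)
    | connect (adj (G :\ e)) x (inr e.2)].
Proof.
pose P := [pred z | [|| connect (adj (G :\ e)) x z, connect (adj (G :\ e)) x (inl e.1)
                      | connect (adj (G :\ e)) x (inr e.2)]].
have closedP : closed (adj G) P.
  apply: intro_closed; first exact: connect_adj_sym.
  move=> u w Guw; rewrite !inE => /or3P[xu|->|->]; rewrite ?orbT //.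
  have [Duw|nDuw] := boolP (adj (G :\ e) u w); first by rewrite (connect_trans xu (connect1 Duw)).
  by case/orP: (adj_setD1 Guw nDuw) => /eqP eu; rewrite -eu xu ?orbT.
by move=> /(closed_connect closedP); rewrite !inE connect0 => <-.
Qed.

Lemma ucycle_of_connect_setD1 G e : e \in G ->
  connect (adj (G :\ e)) (inl e.1) (inr e.2) ->
  exists c, ucycle (adj G) c /\ 2 < size c.
Proof.
move=> eG /connectP[p pp lp]; case: (shortenP pp) lp => p' pp' up' _ lp {pp}.
exists (inl e.1 :: p'); split.
  rewrite /ucycle up' andbT /= rcons_path -lp (sub_path (adjS (subsetDl G _)) pp').
  by rewrite adj_sym adj_edge.
case: p' pp' {up'} lp => [|y [|z q]] //= pp' lp.
by move: pp'; rewrite -lp andbT -surjective_pairing in_setD1 eqxx.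
Qed.

Lemma acyclic_bridge G e : acyclic G -> e \in G ->
  ~~ connect (adj (G :\ e)) (inl e.1) (inr e.2).
Proof. by move=> acG eG; apply/negP => /(ucycle_of_connect_setD1 eG)[c]; apply: acG. Qed.

Lemma acyclicS G H : G \subset H -> acyclic H -> acyclic G.
Proof.
move=> sGH acH c [/andP[cG uc] size_c]; apply: (acH c); split=> //.
by rewrite /ucycle uc andbT (sub_cycle (adjS sGH)).
Qed.

Lemma tree_on_acyclic (tau : {set 'I_n}) G : is_tree_on tau G -> acyclic G.
Proof. by case. Qed.

End BipartiteGraphs.

Definition nodes n d (tau : {set 'I_n}) : {set node n d} := [set x | nodeset tau x].

Lemma card_nodes n d (tau : {set 'I_n}) : #|nodes d tau| = #|tau| + d.
Proof.
have inl_inj : injective (@inl 'I_n 'I_d) by move=> ? ? [].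
have inr_inj : injective (@inr 'I_n 'I_d) by move=> ? ? [].
have disj : [disjoint inl @: tau & inr @: [set: 'I_d]].
  by apply/pred0P => x /=; apply/andP => -[/imsetP[l _ ->] /imsetP[]].
have -> : nodes d tau = inl @: tau :|: inr @: [set: 'I_d].
  apply/setP => -[l|r]; rewrite !inE ?mem_imset ?in_setT ?orbT //=.
  by case: imsetP => [[] //|]; rewrite orbF.
by rewrite cardsU (disjoint_setI0 disj) cards0 subn0 !card_imset // cardsT card_ord.
Qed.

Section Trees.
Variables (n d : nat) (tau : {set 'I_n}) (C : graph n d).
Hypothesis C_tree : is_tree_on tau C.
Variable rho : node n d.
Hypothesis rho_tau : nodeset tau rho.
Implicit Types (G : graph n d) (e : 'I_n * 'I_d) (x : node n d).

Definition far_end e : node n d :=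
  if connect (adj (C :\ e)) rho (inl e.1) then inr e.2 else inl e.1.
Definition near_end e : node n d :=
  if connect (adj (C :\ e)) rho (inl e.1) then inl e.1 else inr e.2.

Lemma adj_near_far_end G e : adj G (near_end e) (far_end e) = (e \in G).
Proof. by rewrite /near_end /far_end; case: ifP; rewrite ?adj_edge // adj_sym adj_edge. Qed.

Lemma connect_far_end G e x : e \in G ->
  connect (adj G) x (inl e.1) -> connect (adj G) x (far_end e).
Proof. by move=> eG; rewrite /far_end; case: ifP => // _; rewrite connect_edge. Qed.

Lemma far_end_unreachable e : e \in C -> ~~ connect (adj (C :\ e)) rho (far_end e).
Proof.
move=> eC; rewrite /far_end; case: ifPn => // rho_l.
apply: contra (acyclic_bridge (tree_on_acyclic C_tree) eC).
by apply: connect_trans; rewrite connect_adj_sym.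
Qed.

Lemma near_end_reachable e : e \in C -> connect (adj (C :\ e)) rho (near_end e).
Proof.
move=> eC; have rho_e1 : connect (adj C) rho (inl e.1).
  by case: C_tree => C_tau C_conn _; apply: C_conn; last exact: C_tau.
rewrite /near_end; case: ifPn => // rho_nl.
by case/or3P: (connect_setD1 e rho_e1) => [rho_l|rho_l|//]; rewrite rho_l in rho_nl.
Qed.

Lemma far_end_inj : {in C &, injective far_end}.
Proof.
move=> e1 e2 e1C e2C far12; apply/eqP/negPn/negP => ne12.
have e2C1 : e2 \in C :\ e1 by rewrite in_setD1 eq_sym ne12.
have e1C2 : e1 \in C :\ e2 by rewrite in_setD1 ne12.
case/or3P: (connect_setD1 e1 (near_end_reachable e2C)) => rho_e1.
- have rho_near : connect (adj (C :\ e1)) rho (near_end e2).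
    by apply: connectS rho_e1; rewrite setDDl setUC -setDDl subsetDl.
  have := far_end_unreachable e1C.
  by rewrite far12 (connect_trans rho_near (connect1 _)) // adj_near_far_end.
- have := far_end_unreachable e2C.
  by rewrite -far12 connect_far_end // (connectS _ rho_e1) // subsetDl.
- have := far_end_unreachable e2C.
  by rewrite -far12 connect_far_end // connect_edge // (connectS _ rho_e1) // subsetDl.
Qed.

Lemma far_end_nodes e : e \in C -> far_end e \in nodes d tau :\ rho.
Proof.
move=> eC; rewrite !inE; apply/andP; split.
  by apply: contraNneq (far_end_unreachable eC) => ->; rewrite connect0.
by rewrite /far_end; case: ifP => //= _; case: C_tree => C_tau _ _; apply: C_tau.
Qed.

Lemma tree_card_edges_lt : #|C| < #|nodes d tau|.
Proof.
rewrite -(card_in_imset far_end_inj) (cardsD1 rho (nodes d tau)) inE rho_tau add1n ltnS.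
by apply/subset_leq_card/subsetP => _ /imsetP[e eC ->]; apply: far_end_nodes.
Qed.

End Trees.

Section Topes.
Variables (n d : nat) (v : 'I_d -> nat).
Implicit Types (sigma : {set 'I_n}) (G M : graph n d) (e : 'I_n * 'I_d).

Lemma tope_edge_left sigma G l r : is_tope v sigma G -> (l, r) \in G -> l \in sigma.
Proof.
move=> [Gl _] lrG; have : 0 < ldeg G l by apply/card_gt0P; exists (l, r); rewrite inE lrG /=.
by rewrite Gl; case: (l \in sigma).
Qed.

(* Otherwise the component [K] of [inr e.2] in [H] misses [inl e.1].  Every edge of [H] has
   both ends in [K] or none, so counting the edges of [M], resp. [G], with left end in [K] and
   with right end in [K] gives equal numbers, resp. numbers differing by one (the edge [e]);
   but both counts agree between [G] and [M] since their degrees agree. *)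
Lemma tope_exchange_connect sigma G M e :
  is_tope v sigma G -> is_tope v sigma M -> e \in G -> e \notin M ->
  connect (adj ((G :|: M) :\ e)) (inl e.1) (inr e.2).
Proof.
move=> [Gl Gr] [Ml Mr] eG eM; set H := (G :|: M) :\ e.
apply/negPn/negP => e_cut.
pose KL := [set l | connect (adj H) (inr e.2) (inl l)].
pose KR := [set r | connect (adj H) (inr e.2) (inr r)].
pose edgesL (X : graph n d) := #|[set x in X | x.1 \in KL]|.
pose edgesR (X : graph n d) := #|[set x in X | x.2 \in KR]|.
have edgesLR (X : graph n d) : X \subset H -> edgesL X = edgesR X.
  move=> /subsetP XH; apply: eq_card => x; rewrite !inE.
  by case: (boolP (x \in X)) => //= xX; rewrite (connect_edge _ (XH x xX)).
have GeH : G :\ e \subset H by apply/setSD/subsetUl.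
have MH : M \subset H.
  by apply/subsetP => x xM; rewrite !inE xM orbT andbT; apply: contraNneq eM => <-.
have edgesL_GM : edgesL G = edgesL M.
  by rewrite /edgesL !card_setI_preim; apply: eq_bigr => l _; exact: etrans (Gl l) (esym (Ml l)).
have edgesR_GM : edgesR G = edgesR M.
  by rewrite /edgesR !card_setI_preim; apply: eq_bigr => r _; exact: etrans (Gr r) (esym (Mr r)).
have edgesL_Ge : edgesL G = edgesL (G :\ e).
  apply: eq_card => x; rewrite !inE; case: eqVneq => [->|//].
  by rewrite (connect_adj_sym H) (negbTE e_cut) andbF.
have edgesR_Ge : edgesR G = (edgesR (G :\ e)).+1.
  rewrite /edgesR (cardsD1 e) !inE eG connect0 add1n; congr _.+1.
  by apply: eq_card => x; rewrite !inE andbA.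
apply: (@n_Sn (edgesR G)).
by rewrite {1}edgesR_Ge -(edgesLR _ GeH) -edgesL_Ge edgesL_GM (edgesLR _ MH) edgesR_GM.
Qed.

Lemma acyclic_tope_eq sigma G M : acyclic (G :|: M) ->
  is_tope v sigma G -> is_tope v sigma M -> G = M.
Proof.
suff sub_GM G' M' : acyclic (G' :|: M') ->
    is_tope v sigma G' -> is_tope v sigma M' -> G' \subset M'.
  by move=> acGM tG tM; apply/eqP; rewrite eqEsubset !sub_GM // setUC.
move=> acGM tG tM; apply/subsetP => e eG; apply/negPn/negP => eM.
have eGM : e \in G' :|: M' by rewrite inE eG.
by have /negP := acyclic_bridge acGM eGM; apply; apply: tope_exchange_connect tG tM eG eM.
Qed.

End Topes.

Section LinkageCovector.
Variables (n d : nat) (v : 'I_d -> nat) (M : {set 'I_n} -> graph n d).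
Hypotheses (v_gt0 : forall i, 0 < v i) (M_field : tope_field v M) (M_linkage : linkage v M).
Variable tau : {set 'I_n}.
Hypothesis tau_card : #|tau| = (thickness v).+1.
Local Notation C := (covector v M tau).

Lemma covector_tree : is_tree_on tau C.
Proof. exact: M_linkage. Qed.

Lemma card_tau_setD1 j : j \in tau -> #|tau :\ j| = thickness v.
Proof. by move=> j_tau; apply/succn_inj; rewrite -tau_card (cardsD1 j tau) j_tau. Qed.

Lemma tope_tau_setD1 j : j \in tau -> is_tope v (tau :\ j) (M (tau :\ j)).
Proof. by move=> j_tau; apply/M_field/card_tau_setD1. Qed.

Lemma tope_sub_covector j : j \in tau -> M (tau :\ j) \subset C.
Proof. by move=> j_tau; apply: bigcup_sup; rewrite subsetDl card_tau_setD1 ?eqxx. Qed.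

Lemma covector_rnbhd_gt i : v i < #|rnbhd C i|.
Proof.
have [t t_tau] : exists t, t \in tau by apply/card_gt0P; rewrite tau_card.
have [l] : exists l, l \in rnbhd (M (tau :\ t)) i.
  by apply/card_gt0P; rewrite -rdeg_rnbhd; case: (tope_tau_setD1 t_tau) => _ ->; apply: v_gt0.
rewrite inE => li.
have l_tau : l \in tau.
  by have := tope_edge_left (tope_tau_setD1 t_tau) li; rewrite inE => /andP[].
have l_C : l \in rnbhd C i by rewrite inE (subsetP (tope_sub_covector t_tau) _ li).
have sub_l : rnbhd (M (tau :\ l)) i \subset rnbhd C i :\ l.
  apply/subsetP => l' l'i; rewrite inE in l'i.
  have := tope_edge_left (tope_tau_setD1 l_tau) l'i; rewrite !inE => /andP[-> _].
  exact: subsetP (tope_sub_covector l_tau) _ l'i.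
rewrite (cardsD1 l) l_C add1n ltnS.
by case: (tope_tau_setD1 l_tau) => _ <-; rewrite rdeg_rnbhd subset_leq_card.
Qed.

Lemma card_covector_le : #|C| <= \sum_(i < d) (v i).+1.
Proof.
have [t t_tau] : exists t, t \in tau by apply/card_gt0P; rewrite tau_card.
under eq_bigr do rewrite -addn1.
rewrite big_split /= sum1_card card_ord -ltnS -addSn -tau_card -card_nodes.
exact: (tree_card_edges_lt covector_tree (rho := inl t)).
Qed.

Lemma covector_card_rnbhd i : #|rnbhd C i| = (v i).+1.
Proof.
have sum_le : \sum_(i < d) (v i).+1 <= \sum_(i < d) #|rnbhd C i|
                ?= iff [forall i, (v i).+1 == #|rnbhd C i|].
  by apply: leqif_sum => i' _; apply/leqif_eq/covector_rnbhd_gt.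
have := sum_le.2; rewrite eqn_leq sum_le.1 sum_card_rnbhd card_covector_le.
by move=> /esym/forallP/(_ i)/eqP.
Qed.

End LinkageCovector.

Theorem lemma3p10 (n d : nat) (v : 'I_d -> nat) (M : {set 'I_n} -> graph n d)
  (hv : forall i, 0 < v i) (hk : thickness v < n)
  (hM : tope_field v M) (hlink : linkage v M)
  (tau : {set 'I_n}) (htau : #|tau| = (thickness v).+1) :
  (forall i : 'I_d, #|[set l : 'I_n | (l, i) \in covector v M tau]| = (v i).+1) /\
  (forall j : 'I_n, j \in tau ->
     M (tau :\ j) \subset covector v M tau /\
     (forall G : graph n d, G \subset covector v M tau ->
        is_tope v (tau :\ j) G -> G = M (tau :\ j))).
Proof.
split; first exact: (covector_card_rnbhd hv hM hlink htau).
move=> j j_tau; have M_sub := tope_sub_covector M htau j_tau.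
split=> // G G_sub G_tope.
apply: acyclic_tope_eq G_tope (tope_tau_setD1 hM htau j_tau).
apply: acyclicS (tree_on_acyclic (covector_tree hlink htau)).
by rewrite subUset G_sub.
Qed.
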